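(* If $G$ is a finite graph that does not contain $K_{t,t}$ as a subgraph, then \[\deg(G)/(2t^2)<\mathrm{fw}_1(G)\le(\deg(G)+1)^t.\] Consequently, if $\mathcal C$ is a weakly sparse class of graphs, then $\sup_{G\in\mathcal C}\mathrm{fw}_1(G)<\infty$ if and only if $\mathcal C$ has bounded degeneracy.
   Context: Graphs are finite, simple, undirected. $\deg(G)$ (degeneracy) is the least $d$ such that some total order of $V(G)$ has every vertex with at most $d$ earlier neighbours. A class is weakly sparse if there is $t$ such that no graph in it contains $K_{t,t}$ as a subgraph. A $k$-flip of $G$ is obtained by choosing a partition $\mathcal P$ of $V(G)$ with at most $k$ parts and, for some pairs $A,B$ of (possibly equal) parts, inverting adjacency of every pair of distinct $x\in A,y\in B$. Flipper game of radius $1$ and width $k$: $G_0=G$, runner chooses $v_0$; in round $i\ge1$ the flipper announces a $k$-flip $G_i$ of $G$, the runner moves from $v_{i-1}$ to $v_i$ equal or adjacent to $v_{i-1}$ in $G_{i-1}$; the flipper wins if $v_i$ is isolated in $G_i$. $\mathrm{fw}_1(G)$ is the least $k$ for which the flipper has a winning strategy. *)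

From mathcomp Require Import all_boot all_order all_algebra.
From mathcomp Require Import boolp.
Set Implicit Arguments. Unset Strict Implicit. Unset Printing Implicit Defensive.

Record sgraph := SGraph {
  vert :> finType;
  adj : rel vert;
  adj_sym : symmetric adj;
  adj_irr : irreflexive adj }.

Section Defs.
Variable G : sgraph.

Definition has_Ktt (t : nat) : bool :=
  [exists A : {set G}, exists B : {set G},
     [&& #|A| == t, #|B| == t, [disjoint A & B] &
         [forall a in A, forall b in B, adj a b]]].

(* Total orders of V(G) are encoded as bijections V(G) -> 'I_#|V(G)|
   (injective maps between sets of equal size); "u earlier than v" is f u < f v. *)
Definition degenerate_with (d : nat) : bool :=
  [exists f : {ffun G -> 'I_#|G|}, injectiveb f &&
     [forall v, #|[set u | adj v u & f u < f v]| <= d]].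

Lemma degenerate_with_ex : exists d, degenerate_with d.
Proof.
exists #|G|; apply/existsP; exists [ffun x => enum_rank x].
apply/andP; split.
  by apply/injectiveP => x y; rewrite !ffunE => /enum_rank_inj.
by apply/forallP => v; apply: max_card.
Qed.

Definition degeneracy : nat := ex_minn degenerate_with_ex.

(* A k-flip: partition into (at most) k parts, given by p : V -> 'I_k,
   and a set of (unordered, possibly equal) pairs of parts, given by F
   (the pair {A,B} is flipped iff F A B || F B A). *)
Definition flip_adj (k : nat) (p : G -> 'I_k) (F : rel 'I_k) : rel G :=
  fun x y => (x != y) && (adj x y (+) (F (p x) (p y) || F (p y) (p x))).

Definition isolated (H : rel G) (x : G) : Prop := forall y, ~~ H x y.

(* A flipper strategy: given the runner's positions v_0,...,v_{i-1},
   announce the k-flip G_i. *)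
Definition fstrategy (k : nat) := seq G -> ((G -> 'I_k) * rel 'I_k).

Definition round_graph (k : nat) (s : fstrategy k) (v : nat -> G) (i : nat)
  : rel G :=
  match i with
  | 0 => adj (s := G)
  | i'.+1 => let pf := s (mkseq v i) in flip_adj pf.1 pf.2
  end.

(* The flipper wins the radius-1 width-k flipper game on G: some strategy
   such that along every legal runner play there is a round i >= 1 where v_i
   is isolated in G_i.  (The runner may always stay put, so quantifying over
   infinite legal plays is the same as requiring the game to end.) *)
Definition flipper_wins (k : nat) : Prop :=
  exists s : fstrategy k, forall v : nat -> G,
    (forall i, v i.+1 = v i \/ round_graph s v i (v i) (v i.+1)) ->
    exists i, 0 < i /\ isolated (round_graph s v i) (v i).

Lemma flipper_wins_ex : exists k, `[< flipper_wins k >].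
Proof.
exists #|G|; apply/asboolP.
pose p := fun x : G => enum_rank x.
pose F := fun i j : 'I_#|G| => adj (enum_val i) (enum_val j).
exists (fun _ => (p, F)) => v _; exists 1; split => // y /=.
by rewrite /flip_adj /p /F !enum_rankK (@adj_sym G (v 1%N) y) orbb addbb andbF.
Qed.

Definition fw1 : nat := ex_minn flipper_wins_ex.

End Defs.

Definition weakly_sparse (C : sgraph -> Prop) : Prop :=
  exists t, forall G, C G -> ~~ has_Ktt G t.

Definition bounded_degeneracy (C : sgraph -> Prop) : Prop :=
  exists d, forall G, C G -> degeneracy G <= d.

Definition bounded_fw1 (C : sgraph -> Prop) : Prop :=
  exists k, forall G, C G -> fw1 G <= k.

From mathcomp Require Import all_boot all_order all_algebra.
From mathcomp Require Import zify.
From mathcomp Require Import boolp unstable.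

Set Implicit Arguments. Unset Strict Implicit. Unset Printing Implicit Defensive.

(* If deg(G) >= 2t^2 k, some nonempty S induces a subgraph of
   minimum degree at least D = deg(G).  In a k-flip call a vertex of S low if it
   has at most l = k(t-1) flipped neighbours in S.  If a part of the flip
   contained t low vertices, at least D - l vertices of S would have their
   adjacency to that part flipped, and all but t + tl of them would be
   G-adjacent to all t low vertices, giving a K_{t,t}.  Hence at most l vertices
   of S are low, and a runner standing on a vertex with more than l neighbours
   in S can always step to a vertex that is not low in the next flip, so it is
   never isolated.

   Fix an ordering witnessing degeneracy d.  When the runner has
   just moved from w to u, the flipper isolates the guard of u: u together with
   its earlier neighbours other than w if w is earlier than u, and u alone
   otherwise.  A guard has at most d vertices, and without K_{t,t} the vertices
   of G can be sorted into (d+1)^t classes such that each guard vertex is alone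
   in its class and every other class is homogeneous towards the guard, so a
   single flip deletes exactly the edges at the guard.  After a step from w up
   to a later vertex u the runner can neither return to w nor go to another
   earlier neighbour of u, so it keeps moving up, and its walk cannot go on
   forever. *)

Lemma card_geq_subset (T : finType) (A : {set T}) n :
  n <= #|A| -> exists2 B : {set T}, B \subset A & #|B| = n.
Proof.
case/card_geqP => s [s_uniq s_size sA]; exists [set x in s].
  by apply/subsetP => x; rewrite inE; apply: sA.
by rewrite cardsE; move/card_uniqP: s_uniq => ->.
Qed.

Lemma eq_from_padded_nth (T : eqType) (x0 : T) n (a b : seq T) :
  size a <= n -> size b <= n -> x0 \notin a -> x0 \notin b ->
  (forall j, j < n -> nth x0 a j = nth x0 b j) -> a = b.
Proof.
move=> a_n b_n x0a x0b eq_ab.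
have eq_size : size a = size b.
  apply/eqP; rewrite eqn_leq; apply/andP; split; rewrite leqNgt; apply/negP => lt.
    move: (mem_nth x0 lt); rewrite eq_ab ?(leq_trans lt) //.
    by rewrite nth_default // (negbTE x0a).
  move: (mem_nth x0 lt); rewrite -eq_ab ?(leq_trans lt) //.
  by rewrite nth_default // (negbTE x0b).
apply: (eq_from_nth eq_size) => j ja; apply: eq_ab.
exact: leq_trans ja a_n.
Qed.

Lemma eq_rot_uniq (T : eqType) (s : seq T) i j :
  uniq s -> i < size s -> j < size s -> rot i s = rot j s -> i = j.
Proof.
case: s => // x0 s' s_uniq i_lt j_lt /(congr1 (nth x0 ^~ 0)).
rewrite /rot !nth_cat !size_drop !subn_gt0 i_lt j_lt !nth_drop !addn0.
by move/eqP; rewrite nth_uniq // => /eqP.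
Qed.

Lemma no_persistent_ascent (a : nat -> nat) n :
  (forall i, a i < n) -> (forall i, a i != a i.+1) ->
  ~ (forall i, a i < a i.+1 -> a i.+1 < a i.+2).
Proof.
move=> a_lt a_neq ascent.
pose P i := if a i < a i.+1 then n - a i.+1 else n + a i.+1.
have P_dec i : P i.+1 < P i.
  have := a_lt i.+1; have := a_lt i.+2; have := a_neq i.+1; have := ascent i.
  rewrite /P; case: (ltnP (a i) (a i.+1)); case: (ltnP (a i.+1) (a i.+2)); lia.
have P_le i : P i + i <= P 0.
  by elim: i => [|i IHi]; rewrite ?addn0 // addnS (leq_trans _ IHi) ?ltn_add2r.
by have := P_le (P 0).+1; rewrite addnS ltnNge leq_addl.
Qed.

Definition nbh_in (T : finType) (H : rel T) (S : {set T}) (v : T) : {set T} :=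
  [set u in S | H v u].

Definition low_in (T : finType) (H : rel T) (S : {set T}) (l : nat) : {set T} :=
  [set u in S | #|nbh_in H S u| <= l].

Section Graph.
Variable G : sgraph.

Lemma has_KttI t (A B : {set G}) : #|A| = t -> #|B| = t -> [disjoint A & B] ->
  {in A & B, forall a b, adj a b} -> has_Ktt G t.
Proof.
move=> cardA cardB disjAB adjAB; apply/existsP; exists A; apply/existsP; exists B.
rewrite cardA cardB disjAB !eqxx /=.
by apply/forall_inP => a aA; apply/forall_inP => b bB; apply: adjAB.
Qed.

Lemma has_Ktt0 : has_Ktt G 0.
Proof.
apply: (@has_KttI 0 set0 set0); rewrite ?cards0 ?disjoints_subset ?sub0set //.
by move=> a; rewrite inE.
Qed.

Lemma has_Ktt_gt0 t : ~~ has_Ktt G t -> 0 < t.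
Proof. by case: t; rewrite ?has_Ktt0. Qed.

Lemma no_K11_edgeless : ~~ has_Ktt G 1 -> forall x y : G, ~~ adj x y.
Proof.
move=> noK x y; apply: contra noK => xy; apply: (@has_KttI 1 [set x] [set y]).
- exact: cards1.
- exact: cards1.
- by rewrite disjoints1 inE; apply: contraTneq xy => ->; rewrite adj_irr.
- by move=> a b /set1P -> /set1P ->.
Qed.

Lemma degeneracyP : degenerate_with G (degeneracy G).
Proof. by rewrite /degeneracy; case: ex_minnP. Qed.

Lemma degeneracy_min e : degenerate_with G e -> degeneracy G <= e.
Proof. by rewrite /degeneracy; case: ex_minnP => d _; apply. Qed.

Lemma degeneracy_le_card : degeneracy G <= #|G|.
Proof.
apply: degeneracy_min; apply/existsP; exists [ffun x => enum_rank x].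
apply/andP; split; last by apply/forallP => v; apply: max_card.
by apply/injectiveP => x y; rewrite !ffunE => /enum_rank_inj.
Qed.

Lemma degenerate0_edgeless : degenerate_with G 0 -> forall x y : G, ~~ adj x y.
Proof.
case/existsP => f /andP [/injectiveP f_inj /forallP no_back] x y; apply/negP => xy.
have no_earlier u w : adj u w -> f w < f u -> False.
  move=> uw lt; move: (no_back u); rewrite leqn0 cards_eq0 => /eqP /setP /(_ w).
  by rewrite !inE uw lt.
have : f x != f y by apply: contraTneq xy => /f_inj ->; rewrite adj_irr.
rewrite -val_eqE neq_ltn => /orP [lt|lt]; last exact: (no_earlier x y).
by apply: (no_earlier y x); rewrite 1?adj_sym.
Qed.

Lemma fw1P : flipper_wins G (fw1 G).
Proof. by rewrite /fw1; case: ex_minnP => k /asboolP. Qed.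

Lemma fw1_min k : flipper_wins G k -> fw1 G <= k.
Proof. by rewrite /fw1; case: ex_minnP => m _ min_m /asboolP; apply: min_m. Qed.

Lemma fw1_gt0 : 0 < #|G| -> 0 < fw1 G.
Proof.
case/card_gt0P => x _; have [s _] := fw1P.
by case: (fw1 G) s => // s; case: ((s [::]).1 x).
Qed.

Lemma flip_adj_unflipped k (p : G -> 'I_k) F x y :
  ~~ (F (p x) (p y) || F (p y) (p x)) -> flip_adj p F x y = adj x y.
Proof.
rewrite /flip_adj => /negbTE ->; rewrite addbF.
by case: eqVneq => // ->; rewrite adj_irr.
Qed.

Lemma flip_adj_flipped k (p : G -> 'I_k) F x y :
  F (p x) (p y) || F (p y) (p x) -> x != y -> flip_adj p F x y = ~~ adj x y.
Proof. by rewrite /flip_adj => -> ->; rewrite addbT. Qed.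

Lemma round_graph_ext k (s : fstrategy G k) (v v' : nat -> G) i :
  {in gtn i, v =1 v'} -> round_graph s v i = round_graph s v' i.
Proof.
case: i => //= i eq_v; have -> // : mkseq v i.+1 = mkseq v' i.+1.
by apply/eq_in_map => j; rewrite mem_iota => /andP [_ /eq_v].
Qed.

Lemma edgeless_flipper_wins k : (forall x y : G, ~~ adj x y) -> flipper_wins G k.+1.
Proof.
move=> edgeless; exists (fun=> (fun=> ord0, fun _ _ => false)) => v _.
by exists 1; split=> // y; rewrite /= /flip_adj (negbTE (edgeless _ _)) andbF.
Qed.

End Graph.

Section Degeneracy.
Variables (G : sgraph) (e : nat).

Section Peeling.
Hypothesis peel : forall S : {set G}, S != set0 ->
  exists2 v, v \in S & #|nbh_in (@adj G) S v| <= e.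

Lemma peeling_rank (S : {set G}) : exists r : G -> nat,
  [/\ {in S &, injective r}, {in S, forall v, r v < #|S|} &
      {in S, forall v, #|[set u in S | adj v u & r u < r v]| <= e}].
Proof.
have [n] := ubnP #|S|; elim: n S => // n IHn S S_lt.
have [->|S0] := eqVneq S set0; first by exists (fun=> 0); split=> [u|u|u]; rewrite inE.
have [v vS v_low] := peel S0.
have card_S : #|S| = #|S :\ v|.+1 by rewrite (cardsD1 v) vS.
have [|r [r_inj r_lt r_low]] := IHn (S :\ v); first by rewrite -ltnS -card_S.
have in_Sv u : u \in S -> u != v -> u \in S :\ v by rewrite !inE => -> ->.
exists (fun u => if u == v then #|S :\ v| else r u); rewrite card_S; split.
- move=> x y xS yS /=; case: eqVneq => [->|xv]; case: eqVneq => [->|yv] //.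
  + by move=> n_ry; have := r_lt y (in_Sv y yS yv); rewrite -n_ry ltnn.
  + by move=> rx_n; have := r_lt x (in_Sv x xS xv); rewrite rx_n ltnn.
  + by move/r_inj; apply; apply: in_Sv.
- by move=> u uS /=; case: eqVneq => // uv; apply/ltnW/r_lt/in_Sv.
move=> u uS /=; case: eqVneq => [->|uv].
  apply: leq_trans v_low; apply/subset_leq_card/subsetP => w.
  by rewrite !inE => /and3P [-> ->].
apply: leq_trans (r_low u (in_Sv u uS uv)); apply/subset_leq_card/subsetP => w.
rewrite !inE; case: eqVneq => [->|_] /=; last by case/andP => ->.
by rewrite ltnNge ltnW ?andbF // r_lt ?in_Sv.
Qed.

Lemma degenerate_with_peeling : degenerate_with G e.
Proof.
have [r [r_inj r_lt r_low]] := peeling_rank [set: G].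
have r_ord v : r v < #|G| by rewrite -cardsT r_lt ?inE.
apply/existsP; exists [ffun v => Ordinal (r_ord v)]; apply/andP; split.
  by apply/injectiveP => x y; rewrite !ffunE => -[] /r_inj; apply; rewrite inE.
apply/forallP => v; apply: leq_trans (r_low v (in_setT v)).
by apply/subset_leq_card/subsetP => u; rewrite !inE !ffunE.
Qed.

End Peeling.

Lemma dense_subset : ~~ degenerate_with G e ->
  exists2 S : {set G}, S != set0 & {in S, forall v, e < #|nbh_in (@adj G) S v|}.
Proof.
move=> not_deg; apply: contrapT => no_dense; case/negP: not_deg.
apply: degenerate_with_peeling => S S0; apply: contrapT => no_low.
apply: no_dense; exists S => // v vS; rewrite ltnNge.
by apply/negP => v_low; apply: no_low; exists v.
Qed.

End Degeneracy.

(** * Lower bound *)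

Section LowVertices.
Variables (G : sgraph) (t l D : nat) (S : {set G}).
Hypothesis noKtt : ~~ has_Ktt G t.
Hypothesis S_mindeg : {in S, forall v, D <= #|nbh_in (@adj G) S v|}.
Hypothesis D_large : t.*2 + l * t.+1 <= D.
Variables (k : nat) (p : G -> 'I_k) (F : rel 'I_k).
Let H := flip_adj p F.
Let low := low_in H S l.

Section OneClass.
Variables (a : 'I_k) (T : {set G}).
Hypothesis T_low : T \subset [set u in low | p u == a].

Let flipped_with_a : {set G} := [set y in S | F a (p y) || F (p y) a].
Let common_nbh : {set G} :=
  [set y in flipped_with_a :\: T | [forall u in T, adj u y]].

Lemma mem_low_class u : u \in T -> [/\ u \in S, #|nbh_in H S u| <= l & p u = a].
Proof. by move/(subsetP T_low); rewrite !inE => /andP [/andP [-> ->] /eqP]. Qed.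

Lemma mindeg_le_flipped u : u \in T -> D <= l + #|flipped_with_a|.
Proof.
move=> uT; have [uS u_low pu] := mem_low_class uT.
apply: leq_trans (S_mindeg uS) _; apply: leq_trans (leq_add u_low (leqnn _)).
apply/(leq_trans _ (leq_card_setU _ _))/subset_leq_card/subsetP => y.
rewrite !inE => /andP [yS uy]; rewrite yS /= orbC.
case: (boolP (F a (p y) || F (p y) a)) => //= unflipped.
by rewrite /H flip_adj_unflipped ?pu.
Qed.

Lemma card_flipped_le : #|flipped_with_a| <= #|T| + #|common_nbh| + #|T| * l.
Proof.
pose nbhs := \bigcup_(u in T) nbh_in H S u.
have : flipped_with_a \subset T :|: common_nbh :|: nbhs.
  apply/subsetP => y yU; rewrite !in_setU.
  case: (boolP (y \in T)) => //= yNT.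
  have [all_adj|] := boolP [forall u in T, adj u y].
    by rewrite inE in_setD yNT yU all_adj.
  rewrite negb_forall_in => /exists_inP [u uT nadj].
  apply/orP; right; apply/bigcupP; exists u => //.
  have [_ _ pu] := mem_low_class uT.
  move: yU; rewrite !inE => /andP [yS flipped]; rewrite yS /H flip_adj_flipped ?pu //.
  by apply: contraNneq yNT => <-.
move/subset_leq_card/leq_trans; apply.
apply: leq_trans (leq_card_setU _ _) _; apply: leq_add; first exact: leq_card_setU.
apply: leq_trans (card_big_setU _ _ _) _; rewrite -sum_nat_const.
by apply: leq_sum => u /mem_low_class [].
Qed.

Lemma low_class_has_Ktt : #|T| = t -> has_Ktt G t.
Proof.
move=> T_card.
have [u uT] : exists u, u \in T by apply/card_gt0P; rewrite T_card (has_Ktt_gt0 noKtt).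
have common_big : t <= #|common_nbh|.
  by have := mindeg_le_flipped uT; have := card_flipped_le; rewrite T_card; nia.
have [C C_sub C_card] := card_geq_subset common_big.
apply: (has_KttI T_card C_card).
  rewrite disjoint_sym disjoints_subset; apply/subsetP => y /(subsetP C_sub).
  by rewrite !inE => /andP [/andP [] ].
by move=> x y xT /(subsetP C_sub); rewrite inE => /andP [_ /forall_inP]; apply.
Qed.

End OneClass.

Lemma low_class_card a : #|[set u in low | p u == a]| < t.
Proof.
rewrite ltnNge; apply/negP => /card_geq_subset [T T_low T_card].
by move/negP: noKtt; apply; apply: (low_class_has_Ktt T_low).
Qed.

Lemma low_card : #|low| <= k * t.-1.
Proof.
have : low \subset \bigcup_(a : 'I_k) [set u in low | p u == a].
  by apply/subsetP => u u_low; apply/bigcupP; exists (p u); rewrite // inE u_low eqxx.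
move/subset_leq_card/leq_trans; apply; apply: leq_trans (card_big_setU _ _ _) _.
apply: (@leq_trans (\sum_(a : 'I_k) t.-1)); last by rewrite sum_nat_const card_ord.
by apply: leq_sum => a _; rewrite -ltnS (ltn_predK (low_class_card a)) low_class_card.
Qed.

End LowVertices.

Section Runner.
Variables (G : sgraph) (k l : nat) (S : {set G}).
Hypothesis few_low : forall (p : G -> 'I_k) F, #|low_in (flip_adj p F) S l| <= l.

Definition escape (H H' : rel G) (u : G) : G :=
  odflt u [pick w | H u w && (l < #|nbh_in H' S w|)].

Lemma escapeP H (p : G -> 'I_k) F u : l < #|nbh_in H S u| ->
  H u (escape H (flip_adj p F) u) /\
  l < #|nbh_in (flip_adj p F) S (escape H (flip_adj p F) u)|.
Proof.
move=> u_high; rewrite /escape; case: pickP => [w /andP [] //|no_escape].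
have : ~~ (nbh_in H S u \subset low_in (flip_adj p F) S l).
  by apply: contraTN u_high => /subset_leq_card le; rewrite -leqNgt (leq_trans le).
case/subsetPn => w; rewrite !inE => /andP [wS uw]; rewrite wS /= -ltnNge => w_high.
by move: (no_escape w); rewrite uw w_high.
Qed.

Section Play.
Variables (s : fstrategy G k) (v0 : G).
Hypothesis v0_high : l < #|nbh_in (@adj G) S v0|.

Fixpoint runner_history n : seq G :=
  if n is n'.+1 then
    let h := runner_history n' in
    rcons h (escape (round_graph s (nth v0 h) n') (round_graph s (nth v0 h) n'.+1)
                    (last v0 h))
  else [:: v0].

Lemma runner_historyS n : runner_history n.+1 =
  rcons (runner_history n) (escape (round_graph s (nth v0 (runner_history n)) n)
    (round_graph s (nth v0 (runner_history n)) n.+1) (last v0 (runner_history n))).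
Proof. by []. Qed.

Definition runner_play j := nth v0 (runner_history j) j.

Lemma runner_history_mkseq n : runner_history n = mkseq runner_play n.+1.
Proof.
elim: n => [|n IHn] //; rewrite mkseqS -IHn /runner_play runner_historyS.
by rewrite nth_rcons IHn size_mkseq ltnn eqxx.
Qed.

Lemma runner_play_succ n : runner_play n.+1 =
  escape (round_graph s runner_play n) (round_graph s runner_play n.+1) (runner_play n).
Proof.
have nth_history : {in gtn n.+1, nth v0 (runner_history n) =1 runner_play}.
  by move=> j j_lt; rewrite runner_history_mkseq nth_mkseq.
have size_history : size (runner_history n) = n.+1.
  by rewrite runner_history_mkseq size_mkseq.
have last_history : last v0 (runner_history n) = runner_play n.
  by rewrite -nth_last size_history; apply: nth_history; exact: ltnSn.
rewrite {1}/runner_play runner_historyS nth_rcons size_history ltnn eqxx last_history.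
congr escape; apply: round_graph_ext => j j_lt; apply: nth_history => //.
exact: ltnW.
Qed.

Lemma runner_play_high n :
  l < #|nbh_in (round_graph s runner_play n) S (runner_play n)|.
Proof.
by elim: n => [|n IHn] //; rewrite runner_play_succ; apply: (escapeP _ _ IHn).2.
Qed.

Lemma runner_play_legal n :
  round_graph s runner_play n (runner_play n) (runner_play n.+1).
Proof.
by rewrite runner_play_succ; case: n => [|n]; apply: (escapeP _ _ (runner_play_high _)).1.
Qed.

End Play.

Lemma runner_wins v0 : l < #|nbh_in (@adj G) S v0| -> ~ flipper_wins G k.
Proof.
move=> v0_high [s s_wins].
have [i [_ iso]] := s_wins _ (fun i => or_intror (runner_play_legal s v0_high i)).
have /card_gt0P [y] := leq_ltn_trans (leq0n l) (runner_play_high s v0_high i).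
by rewrite inE (negbTE (iso y)) andbF.
Qed.

End Runner.

Lemma degeneracy_lt_fw1 (G : sgraph) t :
  0 < #|G| -> ~~ has_Ktt G t -> degeneracy G < 2 * t ^ 2 * fw1 G.
Proof.
move=> G_ne noKtt; set k := fw1 G; set D := degeneracy G.
have t_gt0 := has_Ktt_gt0 noKtt; have k_gt0 : 0 < k := fw1_gt0 G_ne.
rewrite ltnNge; apply/negP => D_large.
have D_gt0 : 0 < D by apply: leq_trans D_large; rewrite !muln_gt0 t_gt0 k_gt0.
have /dense_subset [S /set0Pn [v0 v0S] S_dense] : ~~ degenerate_with G D.-1.
  by apply/negP => /degeneracy_min; rewrite -/D; lia.
pose l := k * t.-1.
have S_mindeg : {in S, forall v, D <= #|nbh_in (@adj G) S v|}.
  by move=> v /S_dense; rewrite prednK.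
have D_large' : t.*2 + l * t.+1 <= D by rewrite /l; nia.
have few_low p F : #|low_in (flip_adj p F) S l| <= l :=
  low_card noKtt S_mindeg D_large' p F.
apply: (runner_wins few_low _ (fw1P G)); apply: leq_trans (S_mindeg v0 v0S).
by apply: leq_trans D_large'; nia.
Qed.

(** * Upper bound *)

Section IsolatingFlip.
Variables (G : sgraph) (k : nat) (S : {set G}) (p : G -> 'I_k).
Hypothesis p_single : {in S, forall s y, p y = p s -> y = s}.
Hypothesis p_homogeneous : forall y y', y \notin S -> y' \notin S -> p y = p y' ->
  nbh_in (@adj G) S y = nbh_in (@adj G) S y'.

Definition isolating_flip : rel 'I_k := fun c c' =>
  [exists s in S, (p s == c) && [exists y, (p y == c') && adj s y]].

Lemma isolating_flip_outside y c : y \notin S -> isolating_flip (p y) c = false.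
Proof.
move=> yNS; apply/exists_inP => -[s sS /andP [/eqP ps _]].
by move: yNS; rewrite (p_single sS (esym ps)) sS.
Qed.

Lemma isolating_flip_inside s z : s \in S -> z != s ->
  isolating_flip (p s) (p z) = adj s z.
Proof.
move=> sS zs; apply/exists_inP/idP => [[s' s'S /andP [/eqP ps' /existsP [y]]]|sz].
  rewrite (p_single sS ps') => /andP [/eqP pyz sy].
  have [yS|yNS] := boolP (y \in S); first by rewrite (p_single yS (esym pyz)).
  have [zS|zNS] := boolP (z \in S); first by move: yNS; rewrite (p_single zS pyz) zS.
  move: (p_homogeneous yNS zNS pyz) => /setP /(_ s).
  by rewrite !inE sS adj_sym sy adj_sym => /esym.
by exists s => //; rewrite eqxx; apply/existsP; exists z; rewrite eqxx.
Qed.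

Lemma flip_adj_isolating x y :
  flip_adj p isolating_flip x y = [&& adj x y, x \notin S & y \notin S].
Proof.
rewrite /flip_adj; case: eqVneq => [<-|xy] /=; first by rewrite adj_irr.
have [xS|xNS] := boolP (x \in S).
  rewrite isolating_flip_inside 1?eq_sym //.
  have [yS|yNS] := boolP (y \in S).
    by rewrite isolating_flip_inside // adj_sym orbb addbb /= andbF.
  by rewrite isolating_flip_outside // orbF addbb /= andbF.
have [yS|yNS] := boolP (y \in S).
  by rewrite isolating_flip_outside // isolating_flip_inside // adj_sym addbb !andbF.
by rewrite !isolating_flip_outside // addbF !andbT.
Qed.

End IsolatingFlip.

Section IsolatingPartition.
Variables (G : sgraph) (t d : nat).
Hypotheses (t_gt1 : 1 < t) (noKtt : ~~ has_Ktt G t).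
Variable S : {set G}.
Hypothesis S_small : #|S| <= d.

Let N (y : G) : {set G} := nbh_in (@adj G) S y.

Definition label (s : G) : 'I_d.+1 := inord (index s (enum S)).+1.

Lemma label_val s : s \in S -> label s = (index s (enum S)).+1 :> nat.
Proof.
by move=> sS; rewrite inordK // ltnS (leq_trans _ S_small) // cardE index_mem mem_enum.
Qed.

Lemma label_neq0 s : s \in S -> label s != ord0.
Proof. by move=> sS; rewrite -val_eqE /= label_val. Qed.

Lemma label_inj : {in S &, injective label}.
Proof.
move=> s s' sS s'S /(congr1 val); rewrite /= !label_val // => -[].
by apply: (index_inj s); rewrite mem_enum.
Qed.

Definition core (y : G) : {set G} := [set s in take t (enum (N y))].

Definition twins (y : G) : {set G} :=
  [set z | [&& z \notin S, t <= #|N z| & core z == core y]].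

Definition twin_rank (y : G) : nat := index y (enum (twins y)).

(* Words of vertices outside S are duplicate-free, unlike [:: y; y].  A vertex
   with at least t neighbours in S is told apart from its twins by a rotation of
   their common core; it has fewer than t twins, since t twins and their core
   would form a K_{t,t}. *)
Definition word (y : G) : seq G :=
  if y \in S then [:: y; y]
  else if #|N y| < t then enum (N y)
  else rot (twin_rank y) (enum (core y)).

Definition code (y : G) : {ffun 'I_t -> 'I_d.+1} :=
  [ffun j : 'I_t => nth ord0 (map label (word y)) j].

Lemma core_sub y : core y \subset N y.
Proof. by apply/subsetP => s; rewrite inE => /mem_take; rewrite mem_enum. Qed.

Lemma card_core y : t <= #|N y| -> #|core y| = t.
Proof.
move=> y_big; rewrite cardsE.
move/card_uniqP: (take_uniq t (enum_uniq (mem (N y)))) => ->.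
by rewrite size_take -cardE; case: ltngtP y_big.
Qed.

Lemma card_twins_lt y : #|twins y| < t.
Proof.
rewrite ltnNge; apply/negP => /card_geq_subset [Y Y_sub Y_card].
have twinP w : w \in Y -> [/\ w \notin S, t <= #|N w| & core w = core y].
  by move/(subsetP Y_sub); rewrite inE => /and3P [-> -> /eqP].
have [z zY] : exists z, z \in Y by apply/card_gt0P; rewrite Y_card ltnW.
have [_ z_big core_z] := twinP z zY.
move/negP: noKtt; apply; apply: (@has_KttI G t (core y) Y _ Y_card).
- by rewrite -core_z card_core.
- rewrite disjoints_subset; apply/subsetP => s /(subsetP (core_sub y)).
  by rewrite !inE => /andP [sS _]; apply: contraTN sS => /twinP [].
- move=> s w s_core wY; have [_ _ core_w] := twinP w wY.
  move: s_core; rewrite -core_w => /(subsetP (core_sub w)).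
  by rewrite inE adj_sym => /andP [].
Qed.

Lemma twin_rank_lt y : y \notin S -> t <= #|N y| -> twin_rank y < t.
Proof.
move=> yNS y_big; apply: ltn_trans (card_twins_lt y).
by rewrite cardE /twin_rank index_mem mem_enum inE yNS y_big eqxx.
Qed.

Lemma word_sub y : {subset word y <= S}.
Proof.
move=> s; rewrite /word; case: ifP => [yS|_]; first by rewrite !inE => /orP [] /eqP ->.
case: ifP => _; rewrite ?mem_rot mem_enum; last move/(subsetP (core_sub y));
  by rewrite inE => /andP [].
Qed.

Lemma size_word y : size (word y) <= t.
Proof.
rewrite /word; case: ifP => _; first exact: t_gt1.
by case: ltnP => [/ltnW|y_big]; rewrite ?size_rot -cardE ?card_core.
Qed.

Lemma word_uniq y : y \notin S -> uniq (word y).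
Proof. by rewrite /word => /negbTE ->; case: ifP; rewrite ?rot_uniq enum_uniq. Qed.

Lemma code_word y y' : code y = code y' -> word y = word y'.
Proof.
have word_all_S z : word z \in [pred s | all [in S] s] by apply/allP => s /word_sub.
have label_nz z : ord0 \notin map label (word z).
  by apply/mapP => -[s /word_sub sS /esym/eqP]; rewrite (negbTE (label_neq0 sS)).
move/ffunP => code_eq; apply: (inj_in_map label_inj) => //.
apply: (eq_from_padded_nth (n := t)); rewrite ?size_map ?size_word //.
by move=> j j_lt; move: (code_eq (Ordinal j_lt)); rewrite !ffunE.
Qed.

Lemma word_inside s y : s \in S -> word y = word s -> y = s.
Proof.
move=> sS; rewrite {2}/word sS.
have [yS|yNS] := boolP (y \in S); first by rewrite /word yS => -[].
by move=> word_eq; move: (word_uniq yNS); rewrite word_eq /= inE eqxx.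
Qed.

Lemma word_outside y y' : y \notin S -> y' \notin S -> word y = word y' -> N y = N y'.
Proof.
move=> yNS y'NS; rewrite /word (negbTE yNS) (negbTE y'NS).
case: ltnP => y_big; case: ltnP => y'_big.
- by move=> enum_eq; apply/setP => s; rewrite -mem_enum enum_eq mem_enum.
- move/(congr1 size); rewrite size_rot -!cardE card_core // => card_eq.
  by move: y_big; rewrite card_eq ltnn.
- move/(congr1 size); rewrite size_rot -!cardE card_core // => card_eq.
  by move: y'_big; rewrite -card_eq ltnn.
move=> rot_eq.
have core_eq : core y = core y'.
  apply/setP => s.
  by rewrite -mem_enum -(mem_rot (twin_rank y)) rot_eq mem_rot mem_enum.
have twins_eq : twins y = twins y' by rewrite /twins core_eq.
have rank_eq : twin_rank y = twin_rank y'.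
  move: rot_eq; rewrite core_eq; apply: eq_rot_uniq;
    by rewrite ?enum_uniq // -cardE card_core // twin_rank_lt.
have y_twin : y \in enum (twins y') by rewrite mem_enum -twins_eq inE yNS y_big eqxx.
have y'_twin : y' \in enum (twins y') by rewrite mem_enum inE y'NS y'_big eqxx.
move: rank_eq; rewrite /twin_rank twins_eq.
by move/(index_inj y y_twin y'_twin) ->.
Qed.

Lemma card_code : #|{ffun 'I_t -> 'I_d.+1}| = d.+1 ^ t.
Proof. by rewrite card_ffun !card_ord. Qed.

Definition isolating_part (y : G) : 'I_(d.+1 ^ t) :=
  cast_ord card_code (enum_rank (code y)).

Lemma isolating_part_code y y' :
  isolating_part y = isolating_part y' -> code y = code y'.
Proof. by move/cast_ord_inj/enum_rank_inj. Qed.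

Lemma flip_adj_isolating_part x y :
  flip_adj isolating_part (isolating_flip S isolating_part) x y =
  [&& adj x y, x \notin S & y \notin S].
Proof.
apply: flip_adj_isolating => [s sS z /isolating_part_code /code_word|z z' zNS z'NS].
  exact: word_inside.
by move/isolating_part_code/code_word; apply: word_outside.
Qed.

End IsolatingPartition.

Section GuardStrategy.
Variables (G : sgraph) (t d : nat) (f : {ffun G -> 'I_#|G|}).
Hypothesis f_inj : injective f.
Let Up (v : G) : {set G} := [set u | adj v u & f u < f v].
Hypothesis card_Up : forall v, #|Up v| <= d.
Hypotheses (d_gt0 : 0 < d) (t_gt1 : 1 < t) (noKtt : ~~ has_Ktt G t).

Definition guard (w u : G) : {set G} :=
  if w \in Up u then u |: (Up u :\ w) else [set u].

Lemma mem_guard w u : u \in guard w u.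
Proof. by rewrite /guard; case: ifP; rewrite !inE eqxx. Qed.

Lemma card_guard w u : #|guard w u| <= d.
Proof.
rewrite /guard; case: ifP => [wU|_]; last by rewrite cards1.
have := card_Up u; rewrite (cardsD1 w) wU add1n => card_Up_w.
by rewrite (leq_trans (leq_card_setU _ _)) // cards1 add1n.
Qed.

(* For a one-vertex history [:: u] the default [head u] gives [guard u u = [set u]]. *)
Definition last_guard (h : seq G) : {set G} :=
  if rev h is u :: h' then guard (head u h') u else set0.

Lemma last_guard_mkseq (v : nat -> G) i :
  last_guard (mkseq v i.+1) = guard (v i.-1) (v i).
Proof. by case: i => [|i] //; rewrite /last_guard !mkseqS !rev_rcons. Qed.

Definition guard_strategy : fstrategy G (d.+1 ^ t) := fun h =>
  let S := last_guard h in
  (isolating_part t d S, isolating_flip S (isolating_part t d S)).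

Lemma round_graph_guard v i x y : round_graph guard_strategy v i.+1 x y =
  [&& adj x y, x \notin guard (v i.-1) (v i) & y \notin guard (v i.-1) (v i)].
Proof. by rewrite /= last_guard_mkseq flip_adj_isolating_part // card_guard. Qed.

Section GuardedPlay.
Variable v : nat -> G.
Hypothesis legal : forall i,
  v i.+1 = v i \/ round_graph guard_strategy v i (v i) (v i.+1).
Hypothesis never_isolated : forall i,
  ~ isolated (round_graph guard_strategy v i.+1) (v i.+1).

Lemma play_leaves_guard i : v i.+1 \notin guard (v i.-1) (v i).
Proof.
apply/negP => vS; case: (@never_isolated i) => y.
by rewrite round_graph_guard vS andbF.
Qed.

Lemma play_step i : round_graph guard_strategy v i (v i) (v i.+1).
Proof.
case: (@legal i) => // stay.
by have := play_leaves_guard i; rewrite stay mem_guard.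
Qed.

Lemma play_adj i : adj (v i) (v i.+1).
Proof.
by have := play_step i; case: i => // i; rewrite round_graph_guard => /andP [].
Qed.

Lemma play_no_backtrack i : v i.+2 != v i.
Proof.
have := play_step i.+1; rewrite round_graph_guard => /and3P [_ _].
by apply: contraNneq => ->; rewrite mem_guard.
Qed.

Lemma play_ascent i : f (v i) < f (v i.+1) -> f (v i.+1) < f (v i.+2).
Proof.
move=> up; have back : v i \in Up (v i.+1) by rewrite inE adj_sym play_adj.
have : v i.+2 \notin Up (v i.+1).
  apply: contra (play_leaves_guard i.+1) => fwd.
  by rewrite /guard back in_setU1 in_setD1 (play_no_backtrack i) fwd orbT.
rewrite inE play_adj /= -leqNgt leq_eqVlt => /orP [/eqP f_eq|//].
by move: (play_adj i.+1); rewrite (f_inj (val_inj f_eq)) adj_irr.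
Qed.

End GuardedPlay.

Lemma guard_strategy_wins : flipper_wins G (d.+1 ^ t).
Proof.
exists guard_strategy => v legal; apply: contrapT => no_win.
have never_isolated i : ~ isolated (round_graph guard_strategy v i.+1) (v i.+1).
  by move=> iso; apply: no_win; exists i.+1.
apply: (@no_persistent_ascent (fun i => f (v i)) #|G|) => [i|i|i].
- exact: ltn_ord.
- apply: contraTneq (play_adj legal never_isolated i) => /val_inj/f_inj ->.
  by rewrite adj_irr.
- exact: play_ascent legal never_isolated i.
Qed.

End GuardStrategy.

Lemma fw1_le_degeneracy (G : sgraph) t :
  ~~ has_Ktt G t -> fw1 G <= (degeneracy G + 1) ^ t.
Proof.
move=> noKtt; apply: fw1_min; rewrite addn1.
have [deg0|deg_gt0] := posnP (degeneracy G).
  rewrite deg0 exp1n; apply/edgeless_flipper_wins/degenerate0_edgeless.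
  by rewrite -deg0; apply: degeneracyP.
case: t noKtt => [|[|t]] noKtt; first by rewrite has_Ktt0 in noKtt.
  by rewrite expn1; apply/edgeless_flipper_wins/no_K11_edgeless.
case/existsP: (degeneracyP G) => f /andP [/injectiveP f_inj /forallP card_Up].
exact: (guard_strategy_wins f_inj card_Up deg_gt0 _ noKtt).
Qed.

Lemma weakly_sparse_bounded_fw1E (C : sgraph -> Prop) :
  weakly_sparse C -> (bounded_fw1 C <-> bounded_degeneracy C).
Proof.
case=> t noKtt; split=> [[k fw1_le]|[d deg_le]].
  exists (2 * t ^ 2 * k) => G CG; have [G0|G_ne] := posnP #|G|.
    by move: (degeneracy_le_card G); rewrite G0 leqn0 => /eqP ->.
  apply/ltnW/(leq_trans (degeneracy_lt_fw1 G_ne (noKtt G CG))).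
  by rewrite leq_mul2l fw1_le ?orbT.
exists ((d + 1) ^ t) => G CG; apply: leq_trans (fw1_le_degeneracy (noKtt G CG)) _.
by rewrite leq_exp2r ?leq_add2r ?deg_le // (has_Ktt_gt0 (noKtt G CG)).
Qed.

Import GRing.Theory Num.Theory.
Local Open Scope ring_scope.

Theorem mainTheorem7 :
  (forall (G : sgraph) (t : nat), (0 < #|G|)%N -> ~~ has_Ktt G t ->
     (degeneracy G)%:R / (2 * t ^ 2)%:R < (fw1 G)%:R :> rat
     /\ (fw1 G <= (degeneracy G + 1) ^ t)%N)
  /\
  (forall C : sgraph -> Prop, weakly_sparse C ->
     (bounded_fw1 C <-> bounded_degeneracy C)).
Proof.
split=> [G t G_ne noKtt|]; last exact: weakly_sparse_bounded_fw1E.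
split; last exact: fw1_le_degeneracy.
have t_gt0 := has_Ktt_gt0 noKtt.
rewrite ltr_pdivrMr ?ltr0n ?muln_gt0 ?expn_gt0 ?t_gt0 // -natrM ltr_nat mulnC.
exact: degeneracy_lt_fw1.
Qed.
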